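(* For every $m\geq0$ the vector $c_{2m+1}\cdot v$ is a scalar multiple $\gamma_m v$ of $v$, and as formal power series in $z$, $$\sum_{m=0}^\infty \gamma_m\, z^{m}=\frac{1}{z}\left(1-\prod_{i=1}^N\frac{1-z\,\lambda_i(\lambda_i+1)}{1-z\,\lambda_i(\lambda_i-1)}\right).$$ Equivalently, $\sum_{m\ge0}\gamma_m u^{-2m-1}=u\Big(1-\prod_{i=1}^N\frac{u^2-\lambda_i(\lambda_i+1)}{u^2-\lambda_i(\lambda_i-1)}\Big)$ as formal Laurent series in $u^{-1}$.
   Context: Let $N\geq1$, $I=\{-N,\dots,-1,1,\dots,N\}$, and for $k\in I$ put $\bar k=0$ if $k>0$, $\bar k=1$ if $k<0$. The Lie superalgebra $\mathfrak{q}(N)$ over $\mathbb{C}$ is spanned by elements $F_{ij}$ ($i,j\in I$) with $F_{-i,-j}=F_{ij}$ (realized as $F_{ij}=E_{ij}+E_{-i,-j}\in\mathfrak{gl}(N|N)$), $F_{ij}$ of parity $\bar\imath+\bar\jmath\bmod 2$, and supercommutator $$[F_{ij}, F_{kl}] = \delta_{kj} F_{il} - (-1)^{(\bar{\imath}+ \bar{\jmath})(\bar{k} + \bar{l})} \delta_{il} F_{kj} + \delta_{k,-j} F_{-i,l} - (-1)^{(\bar{\imath} + \bar{\jmath})(\bar{k} + \bar{l})} \delta_{-i,l} F_{k,-j}.$$ For $n\geq1$ define $C^{(n)}_{ij}\in U(\mathfrak{q}(N))$ by $$C^{(n)}_{ij} = \sum_{k_1,\ldots,k_{n-1}\in I}F_{ik_1}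 (-1)^{\bar{k}_1} F_{k_1k_2} (-1)^{\bar{k}_2} \cdots F_{k_{n-2}k_{n-1}} (-1)^{\bar{k}_{n-1}} F_{k_{n-1}j}$$ (so $C^{(1)}_{ij}=F_{ij}$), and the Casimir element $c_n=\sum_{i\in I}C^{(n)}_{ii}$. Let $V$ be a representation of $\mathfrak{q}(N)$ and $v\in V$ a vector such that $F_{ij}\cdot v=0$ whenever $|i|<|j|$, and $F_{ii}\cdot v=\lambda_i v$ for $i=1,\dots,N$, where $\lambda_1,\dots,\lambda_N\in\mathbb{C}$. *)

From HB Require Import structures.
From mathcomp Require Import all_boot all_order all_algebra all_field.
Set Implicit Arguments. Unset Strict Implicit. Unset Printing Implicit Defensive.
Import Order.TTheory GRing.Theory Num.Theory.
Local Open Scope ring_scope.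

(* Index set I = {-N,...,-1,1,...,N}: the pair (k, b) : 'I_N * bool encodes
   the index (k+1) if b = false and -(k+1) if b = true.
   So bar(i) = i.2 and |i| = i.1 + 1. *)
Definition Idx (N : nat) : finType := ('I_N * bool)%type.
Definition negI N (i : Idx N) : Idx N := (i.1, ~~ i.2).
Definition barI N (i : Idx N) : bool := i.2.
Definition absI N (i : Idx N) : nat := (i.1 : nat).+1.
Definition posI N (k : 'I_N) : Idx N := (k, false).

Definition sgnb (b : bool) : algC := (-1) ^+ b.
Definition parF N (i j : Idx N) : bool := barI i (+) barI j.

Section Rep.
Variables (N : nat) (V : lmodType algC) (rho : Idx N -> Idx N -> V -> V).

(* Cop n i j is the action of C^{(n+1)}_{ij}:
   C^{(1)}_{ij} = F_ij,  C^{(n+2)}_{ij} = sum_k F_ik (-1)^{bar k} C^{(n+1)}_{kj}. *)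
Fixpoint Cop (n : nat) (i j : Idx N) : V -> V :=
  match n with
  | 0 => rho i j
  | n'.+1 => fun w => \sum_(k : Idx N) rho i k (sgnb (barI k) *: Cop n' k j w)
  end.

Definition Cact (n : nat) (i j : Idx N) : V -> V := Cop n.-1 i j.

Definition casimir (n : nat) (w : V) : V := \sum_(i : Idx N) Cact n i i w.

(* rho is a representation of the Lie superalgebra q(N) on the super vector
   space V; the Z/2-grading of V is encoded by its parity involution P. *)
Definition is_qN_rep (P : V -> V) : Prop :=
  [/\ (forall i j, linear (rho i j)),
      (forall i j w, rho (negI i) (negI j) w = rho i j w),
      linear P /\ (forall w, P (P w) = w),
      (forall i j w, rho i j (P w) = sgnb (parF i j) *: P (rho i j w)) &
      (forall i j k l w,
        let s := sgnb (parF i j && parF k l) in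
        rho i j (rho k l w) - s *: rho k l (rho i j w) =
          (if k == j then rho i l w else 0)
        - s *: (if i == l then rho k j w else 0)
        + (if k == negI j then rho (negI i) l w else 0)
        - s *: (if negI i == l then rho k (negI j) w else 0))].
End Rep.

Section FPS.
Variable R : fieldType.
Definition fps := nat -> R.
Definition fps_one : fps := fun n => (n == 0)%:R.
Definition fps_sub (f g : fps) : fps := fun n => f n - g n.
Definition fps_mul (f g : fps) : fps :=
  fun n => \sum_(k < n.+1) f k * g (n - k)%N.
Definition fps_1mcz (c : R) : fps :=
  fun n => if n == 0%N then 1 else if n == 1%N then - c else 0.
Fixpoint fps_inv_coefs (f : fps) (n : nat) : seq R :=
  match n with
  | 0 => [:: (f 0%N)^-1]
  | n'.+1 => let s := fps_inv_coefs f n' in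
      rcons s (- (f 0%N)^-1 *
               \sum_(1 <= k < n'.+2) f k * nth 0 s (n'.+1 - k)%N)
  end.
Definition fps_inv (f : fps) : fps := fun n => nth 0 (fps_inv_coefs f n) n.
Definition fps_prod (N : nat) (F : 'I_N -> fps) : fps :=
  foldr fps_mul fps_one [seq F i | i <- enum 'I_N].
(* (1/z) f for a series f with zero constant term *)
Definition fps_divz (f : fps) : fps := fun n => f n.+1.
End FPS.

From HB Require Import structures.
From mathcomp Require Import all_boot all_order all_algebra all_field.
From mathcomp Require Import ring.
Set Implicit Arguments. Unset Strict Implicit. Unset Printing Implicit Defensive.
Import Order.TTheory GRing.Theory Num.Theory.
Local Open Scope ring_scope.

(* The operators C^(n)_ij satisfy the same commutation relations with the
   F_ab as the generators F_ij themselves ([Cop_brackets]).  For a highest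
   weight vector v this gives C^(n)_ij v = 0 when |i| < |j|, and commuting
   F_lk past C^(n)_kj for |k| > |l| expresses C^(n+1)_ll v and C^(n+1)_-l,l v
   through level l and the diagonal entries of the higher levels.  Using
   F_-l,l^2 = F_ll one finds by induction C^(2m)_ll v = lam_l u_m(l) v,
   C^(2m)_-l,l v = u_m(l) F_-l,l v and C^(2m+1)_-l,l v = 0, where
     u_(m+1)(l) = lam_l (lam_l - 1) u_m(l) - 2 sum_(M > l) lam_M u_m(M)
   ([casimir_coef]); hence gamma_m = 2 sum_l lam_l u_m(l).  With
   S_k(m) = sum_(l >= k) lam_l u_m(l) ([tail_weight]) and
   Q_k = 1 - 2 z sum_m S_k(m) z^m ([tail_series]), the recurrence says exactly
     (1 - lam_k (lam_k - 1) z) Q_k = (1 - lam_k (lam_k + 1) z) Q_(k+1),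
   so Q_0 is the product of the N rational factors. *)

Section LinearFunction.
Variables (R : pzRingType) (U W : lmodType R) (f : U -> W).
Hypothesis f_lin : linear f.

Lemma linB x y : f (x - y) = f x - f y.
Proof. exact: (zmod_morphism_linear f_lin). Qed.

Lemma linZ a x : f (a *: x) = a *: f x.
Proof. exact: (scalable_linear f_lin). Qed.

Lemma lin0 : f 0 = 0.
Proof. by rewrite -(subrr 0) linB subrr. Qed.

Lemma linN x : f (- x) = - f x.
Proof. by rewrite -sub0r linB lin0 sub0r. Qed.

Lemma linD x y : f (x + y) = f x + f y.
Proof. by rewrite -[in LHS](opprK y) linB linN opprK. Qed.

Lemma lin_sum (I : finType) (F : I -> U) : f (\sum_i F i) = \sum_i f (F i).
Proof. exact: (big_morph f linD lin0). Qed.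

End LinearFunction.

Lemma sgnb_false : sgnb false = 1. Proof. exact: expr0. Qed.
Lemma sgnb_true : sgnb true = -1. Proof. exact: expr1. Qed.
Lemma sgnb_addb b c : sgnb (b (+) c) = sgnb b * sgnb c.
Proof. exact: signr_addb. Qed.

Lemma parF_negI N (a b : Idx N) : parF (negI a) (negI b) = parF a b.
Proof. by rewrite /parF /barI /=; case: a.2; case: b.2. Qed.

Lemma sgnb_parF_trans N p (i k j : Idx N) :
  sgnb (p && parF i k) * sgnb (barI k) * sgnb (p && parF k j) =
  sgnb (p && parF i j) * sgnb (barI k).
Proof.
rewrite -!sgnb_addb; congr sgnb.
by rewrite /parF /barI; case: p; case: i.2; case: k.2; case: j.2.
Qed.

Lemma sgnb_parF_shift N (a b i : Idx N) :
  sgnb (parF a b && parF i b) * sgnb (barI b) =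
  sgnb (parF a b && parF i a) * sgnb (barI a).
Proof.
rewrite -!sgnb_addb; congr sgnb.
by rewrite /parF /barI; case: a.2; case: b.2; case: i.2.
Qed.

Lemma negIK N : involutive (@negI N).
Proof. by case=> k b; rewrite /negI /= negbK. Qed.

Lemma negI_inj N : injective (@negI N).
Proof. exact: inv_inj (@negIK N). Qed.

Lemma negI_eqF N (k : Idx N) : (negI k == k) = false.
Proof. by case: k => a b; rewrite /negI xpair_eqE eqxx /=; case: b. Qed.

Lemma eq_negIF N (k : Idx N) : (k == negI k) = false.
Proof. by rewrite eq_sym negI_eqF. Qed.

Lemma ltn_absI_eqF N (i j : Idx N) : (absI i < absI j)%N -> (i == j) = false.
Proof. by apply: contraTF => /eqP ->; rewrite ltnn. Qed.

Lemma sum_Idx N (W : nmodType) (F : Idx N -> W) :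
  \sum_k F k = \sum_(l : 'I_N) (F (l, false) + F (l, true)).
Proof.
rewrite (eq_bigr (fun p : 'I_N * bool => F (p.1, p.2))); last by case.
rewrite -(pair_bigA _ (fun a b => F (a, b))) /=.
by apply: eq_bigr => i _; rewrite big_bool /= addrC.
Qed.

Definition ifz (W : nmodType) (c : bool) (x : W) : W := if c then x else 0.

Lemma ifzZ (R : pzRingType) (W : lmodType R) c a (x : W) :
  ifz c (a *: x) = a *: ifz c x.
Proof. by case: c; rewrite /ifz ?scaler0. Qed.

Lemma lin_ifz (R : pzRingType) (W : lmodType R) (f : W -> W) c x :
  linear f -> f (ifz c x) = ifz c (f x).
Proof. by move=> f_lin; case: c; rewrite /ifz ?(lin0 f_lin). Qed.

Lemma sum_ifz (W : nmodType) (I : finType) c (F : I -> W) :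
  \sum_k ifz c (F k) = ifz c (\sum_k F k).
Proof. by case: c; rewrite /ifz // big1. Qed.

Lemma sum_ifz_eql (W : nmodType) (I : finType) (a : I) (F : I -> W) :
  \sum_k ifz (a == k) (F k) = F a.
Proof.
rewrite (bigD1 a) //= /ifz eqxx big1 ?addr0 // => k.
by rewrite eq_sym => /negbTE ->.
Qed.

Lemma sum_ifz_eqr (W : nmodType) (I : finType) (a : I) (F : I -> W) :
  \sum_k ifz (k == a) (F k) = F a.
Proof. by under eq_bigr do rewrite eq_sym; exact: sum_ifz_eql. Qed.

Lemma rearrange_sum4 (W : zmodType) (P1 Q1 P2 Q2 U1 V1 U2 V2 : W) :
  (P1 - Q1 + P2 - Q2) + (U1 - V1 + U2 - V2) =
  (U1 - Q1 + U2 - Q2) + ((P1 + P2) - (V1 + V2)).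
Proof.
rewrite opprD !addrA.
rewrite -!(addrAC _ U1) -!(addrAC _ P2) -!(addrAC _ U2) -!(addrAC _ (- Q2)).
rewrite -!(addrAC _ (- Q1)) -!(addrAC _ (- V1)) -!(addrAC _ (- V2)).
by rewrite -!(addrAC _ P1) (addrC U1 P1) -!(addrAC _ U1).
Qed.

Lemma sum_Idx_from N (W : nmodType) (F : Idx N -> W) (l : 'I_N) :
  (forall k : Idx N, (k.1 < l)%N -> F k = 0) ->
  \sum_k F k = F (l, false) + F (l, true)
                + \sum_(M : 'I_N | (l < M)%N) (F (M, false) + F (M, true)).
Proof.
move=> F0; rewrite sum_Idx (bigD1 l) //=; congr (_ + _).
rewrite (bigID (fun M : 'I_N => (l < M)%N)) /= [X in _ + X]big1 ?addr0.
  apply: eq_bigl => M; rewrite andb_idl // => lM.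
  by apply: contraTneq lM => ->; rewrite ltnn.
move=> M /andP [Ml]; rewrite -leqNgt => Mle.
have lt_Ml : (M < l)%N by rewrite ltn_neqAle Mle andbT; apply: contra Ml => /eqP/val_inj ->.
by rewrite !F0 ?addr0.
Qed.

Fixpoint casimir_coef (R : pzRingType) N (lam : 'I_N -> R) (m : nat) (l : 'I_N) : R :=
  if m is m'.+1 then
    (lam l - 1) * (lam l * casimir_coef lam m' l)
    - 2 * \sum_(M : 'I_N | (l < M)%N) lam M * casimir_coef lam m' M
  else 1.

Section CasimirAction.
Variables (N : nat) (V : lmodType algC) (rho : Idx N -> Idx N -> V -> V).
Hypothesis rho_lin : forall i j, linear (rho i j).
Hypothesis rho_negI : forall i j w, rho (negI i) (negI j) w = rho i j w.

Definition brackets_like_F (X : Idx N -> Idx N -> V -> V) : Prop :=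
  forall a b i j w, let s := sgnb (parF a b && parF i j) in
    rho a b (X i j w) - s *: X i j (rho a b w) =
      ifz (i == b) (X a j w) - s *: ifz (a == j) (X i b w)
    + ifz (i == negI b) (X (negI a) j w) - s *: ifz (negI a == j) (X i (negI b) w).

Hypothesis rho_brackets : brackets_like_F rho.

Lemma Cop_lin n i j : linear (Cop rho n i j).
Proof.
elim: n i j => [|n IH] i j //= a x y.
rewrite scaler_sumr -big_split /=; apply: eq_bigr => k _.
by rewrite IH scalerDr !scalerA mulrC -scalerA rho_lin.
Qed.

Lemma Cop_negI n i j w :
  Cop rho n (negI i) (negI j) w = sgnb (odd n) *: Cop rho n i j w.
Proof.
elim: n i j w => [|n IH] i j w /=; first by rewrite rho_negI sgnb_false scale1r.
rewrite scaler_sumr (reindex_inj (@negI_inj N)) /=; apply: eq_bigr => k _.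
rewrite rho_negI IH -[in RHS](linZ (rho_lin _ _)) !scalerA -!sgnb_addb.
by rewrite /barI /=; case: k.2; case: (odd n).
Qed.

Lemma Cop_brackets n : brackets_like_F (Cop rho n).
Proof.
elim: n => [|n IH] a b i j w /=; first exact: rho_brackets.
set sg := sgnb (parF a b && parF i j).
pose y k := sgnb (barI k) *: Cop rho n k j w.
pose s1 k := sgnb (parF a b && parF i k).
pose c k := s1 k * sgnb (barI k).
pose T k := ifz (i == b) (rho a k (y k))
  - sg *: ifz (a == j) (rho i k (sgnb (barI k) *: Cop rho n k b w))
  + ifz (i == negI b) (rho (negI a) k (y k))
  - sg *: ifz (negI a == j) (rho i k (sgnb (barI k) *: Cop rho n k (negI b) w)).
pose D k := (c k *: ifz (k == b) (rho i k (Cop rho n a j w))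
             + c k *: ifz (k == negI b) (rho i k (Cop rho n (negI a) j w)))
          - (s1 k *: ifz (a == k) (rho i b (y k))
             + s1 k *: ifz (negI a == k) (rho i (negI b) (y k))).
have expand_k k : rho a b (rho i k (y k))
    - sg *: rho i k (sgnb (barI k) *: Cop rho n k j (rho a b w)) = T k + D k.
  have /eqP := rho_brackets a b i k (y k); rewrite subr_eq => /eqP ->.
  have /eqP := IH a b k j w; rewrite subr_eq => /eqP IHk.
  have rik := rho_lin i k.
  rewrite /y (linZ (rho_lin a b)) IHk !(linZ rik) (linD rik) (linZ rik).
  rewrite !scalerDr !scalerA !mulrA sgnb_parF_trans addrA addrK.
  rewrite (linB rik) (linD rik) (linB rik) !(linZ rik) !(lin_ifz _ _ rik).
  rewrite !(scalerDr, scalerN) !scalerA ?mulrA sgnb_parF_trans addrC.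
  rewrite /T /D (linZ rik _ (Cop rho n k b w)) (linZ rik _ (Cop rho n k (negI b) w)).
  by rewrite !ifzZ !scalerA; exact: rearrange_sum4.
(* The terms of [D k] produced by the deltas on [k] cancel in pairs after summation. *)
have sumD : \sum_k D k = 0.
  rewrite /D sumrB !big_split /=.
  rewrite -!(eq_bigr _ (fun k _ => ifzZ _ _ _)) sum_ifz_eqr sum_ifz_eql.
  rewrite sum_ifz_eqr sum_ifz_eql /y !(linZ (rho_lin _ _)) !scalerA /c /s1.
  by rewrite sgnb_parF_shift -(parF_negI a b) sgnb_parF_shift subrr.
rewrite (lin_sum (rho_lin a b)) scaler_sumr -sumrB (eq_bigr _ (fun k _ => expand_k k)).
by rewrite big_split /= sumD addr0 /T !(sumrB, big_split) /= -!scaler_sumr !sum_ifz.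
Qed.

Lemma rho_negdiag_sq (l : 'I_N) w :
  rho (l, true) (l, false) (rho (l, true) (l, false) w) = rho (l, false) (l, false) w.
Proof.
have := rho_brackets (l, true) (l, false) (l, true) (l, false) w; cbv zeta.
rewrite xpair_eqE eqxx /parF /barI /negI /= eqxx sgnb_true /ifz scaler0 subr0.
rewrite !scaleN1r !opprK add0r (rho_negI (l, false) (l, false)) eqxx -!mulr2n.
by rewrite -!scaler_nat => /(scalerI _)->; rewrite ?pnatr_eq0.
Qed.

Lemma rho_diag_negdiag_comm (l : 'I_N) w :
  rho (l, false) (l, false) (rho (l, true) (l, false) w) =
  rho (l, true) (l, false) (rho (l, false) (l, false) w).
Proof.
have := rho_brackets (l, false) (l, false) (l, true) (l, false) w; cbv zeta.
rewrite xpair_eqE eqxx /parF /barI /negI /= eqxx sgnb_false /ifz !scale1r subr0.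
by rewrite eqxx sub0r addNr => /eqP; rewrite subr_eq0 => /eqP.
Qed.

Variable v : V.
Hypothesis v_highest : forall i j, (absI i < absI j)%N -> rho i j v = 0.

Lemma rho_Cop_above n i j k : (absI i < absI k)%N ->
  rho i k (Cop rho n k j v) = Cop rho n i j v
    - sgnb (parF i k && parF k j) *: ifz (i == j) (Cop rho n k k v)
    - sgnb (parF i k && parF k j) *: ifz (negI i == j) (Cop rho n k (negI k) v).
Proof.
move=> ik; have := Cop_brackets n i k k j v; cbv zeta.
rewrite v_highest // (lin0 (Cop_lin _ _ _)) eqxx eq_negIF /ifz scaler0 subr0 addr0.
by move->.
Qed.

Lemma Cop_vanish n i j : (absI i < absI j)%N -> Cop rho n i j v = 0.
Proof.
elim: n i j => [|n IH] i j ij /=; first exact: v_highest.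
apply: big1 => k _; rewrite (linZ (rho_lin _ _)).
have [kj | jk] := ltnP (absI k) (absI j).
  by rewrite IH // (lin0 (rho_lin _ _)) scaler0.
rewrite rho_Cop_above ?(leq_trans ij) // IH // ltn_absI_eqF //.
by rewrite (@ltn_absI_eqF _ (negI i)) // /ifz !scaler0 !subr0 scaler0.
Qed.

Lemma CopS_diag n (l : 'I_N) :
  Cop rho n.+1 (l, false) (l, false) v =
    rho (l, false) (l, false) (Cop rho n (l, false) (l, false) v)
    - rho (l, true) (l, false) (Cop rho n (l, true) (l, false) v)
    - (1 + sgnb (odd n)) *: \sum_(M : 'I_N | (l < M)%N) Cop rho n (M, false) (M, false) v.
Proof.
rewrite /= (@sum_Idx_from _ _ _ l); last first.
  by move=> k lk; rewrite Cop_vanish // scaler0 (lin0 (rho_lin _ _)).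
rewrite /barI /= sgnb_false sgnb_true scale1r scaleN1r (linN (rho_lin _ _)).
rewrite (rho_negI (l, true) (l, false)).
congr (_ + _); rewrite scaler_sumr -sumrN; apply: eq_bigr => M lM.
rewrite scale1r scaleN1r (linN (rho_lin _ _)) !rho_Cop_above //= ?ltnS //.
rewrite eqxx negI_eqF /ifz !scaler0 !subr0 /parF /barI /= sgnb_false sgnb_true.
rewrite !scale1r scaleN1r opprK (Cop_negI n (M, false) (M, false)).
by rewrite scalerDl scale1r [in LHS]opprD addrACA subrr add0r opprD.
Qed.

Lemma CopS_negdiag n (l : 'I_N) :
  Cop rho n.+1 (l, true) (l, false) v =
    rho (l, true) (l, false) (Cop rho n (l, false) (l, false) v)
    - rho (l, false) (l, false) (Cop rho n (l, true) (l, false) v)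
    + (1 - sgnb (odd n)) *: \sum_(M : 'I_N | (l < M)%N) Cop rho n (M, true) (M, false) v.
Proof.
rewrite /= (@sum_Idx_from _ _ _ l); last first.
  by move=> k lk; rewrite Cop_vanish // scaler0 (lin0 (rho_lin _ _)).
rewrite /barI /= sgnb_false sgnb_true scale1r scaleN1r (linN (rho_lin _ _)).
rewrite (rho_negI (l, false) (l, false)).
congr (_ + _); rewrite scaler_sumr; apply: eq_bigr => M lM.
rewrite scale1r scaleN1r (linN (rho_lin _ _)) !rho_Cop_above //= ?ltnS //.
rewrite xpair_eqE eqxx /negI /= eqxx /ifz !scaler0 !subr0 /parF /barI /= sgnb_false.
rewrite !scale1r (Cop_negI n (M, true) (M, false)).
by rewrite scalerBl scale1r [in LHS]opprD addrACA subrr add0r opprK addrC.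
Qed.

Variable lam : 'I_N -> algC.
Hypothesis v_weight : forall l : 'I_N, rho (l, false) (l, false) v = lam l *: v.

Definition Cop_even_shape m := forall l : 'I_N,
  Cop rho (2 * m) (l, false) (l, false) v = (lam l * casimir_coef lam m l) *: v /\
  Cop rho (2 * m) (l, true) (l, false) v =
    casimir_coef lam m l *: rho (l, true) (l, false) v.

Definition Cop_odd_shape m := forall l : 'I_N,
  Cop rho (2 * m).+1 (l, false) (l, false) v = casimir_coef lam m.+1 l *: v /\
  Cop rho (2 * m).+1 (l, true) (l, false) v = 0.

Lemma Cop_odd_of_even m : Cop_even_shape m -> Cop_odd_shape m.
Proof.
move=> Hm l; have oddm : odd (2 * m) = false by rewrite mul2n odd_double.
have [Cll Cnl] := Hm l; split.
- rewrite CopS_diag oddm sgnb_false Cll Cnl !(linZ (rho_lin _ _)).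
  rewrite v_weight rho_negdiag_sq v_weight.
  under eq_bigr => M _ do rewrite (Hm M).1.
  by rewrite -scaler_suml !scalerA -!scalerBl /=; congr (_ *: v); ring.
- rewrite CopS_negdiag oddm sgnb_false Cll Cnl !(linZ (rho_lin _ _)).
  rewrite rho_diag_negdiag_comm v_weight (linZ (rho_lin _ _)) !scalerA.
  by rewrite subrr scale0r addr0 mulrC subrr.
Qed.

Lemma Cop_even_of_odd m : Cop_odd_shape m -> Cop_even_shape m.+1.
Proof.
move=> Hm l; rewrite mulnS add2n.
have oddS : odd (2 * m).+1 by rewrite /= mul2n odd_double.
have Cnl0 M : Cop rho (2 * m).+1 (M, true) (M, false) v = 0 by have [] := Hm M.
have [Cll _] := Hm l; split.
- rewrite CopS_diag oddS sgnb_true subrr scale0r subr0 Cll Cnl0.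
  by rewrite (lin0 (rho_lin _ _)) subr0 (linZ (rho_lin _ _)) v_weight scalerA mulrC.
- rewrite CopS_negdiag oddS sgnb_true Cll Cnl0 (lin0 (rho_lin _ _)) subr0.
  by rewrite (linZ (rho_lin _ _)) big1 ?scaler0 ?addr0.
Qed.

Lemma Cop_even m : Cop_even_shape m.
Proof.
elim: m => [|m IH]; last exact/Cop_even_of_odd/Cop_odd_of_even.
by move=> l; rewrite muln0 /= v_weight mulr1 scale1r.
Qed.

Lemma casimir_odd m :
  casimir rho (2 * m + 1) v = (2 * \sum_l lam l * casimir_coef lam m l) *: v.
Proof.
rewrite /casimir /Cact addn1 /= sum_Idx mulr_sumr scaler_suml; apply: eq_bigr => l _.
rewrite (Cop_negI (2 * m) (l, false) (l, false)) mul2n odd_double sgnb_false scale1r.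
by rewrite -mul2n (Cop_even m l).1 -[in RHS]scalerA scaler_nat mulr2n.
Qed.

End CasimirAction.

Section FormalSeries.
Variable R : fieldType.

Local Notation fps_ratio c d := (fps_mul (fps_1mcz c) (fps_inv (fps_1mcz d))).

Lemma fps_inv_coefs_1mcz (d : R) n :
  size (fps_inv_coefs (fps_1mcz d) n) = n.+1 /\
  forall i, (i <= n)%N -> nth 0 (fps_inv_coefs (fps_1mcz d) n) i = d ^+ i.
Proof.
elim: n => [|n [size_n nth_n]] /=.
  by split=> // i; rewrite leqn0 => /eqP ->; rewrite /fps_1mcz /= invr1 expr0.
rewrite size_rcons size_n; split=> // i le_in1.
rewrite nth_rcons size_n; case: ltnP => [/nth_n -> //|le_n1i].
have -> : i = n.+1 by apply/eqP; rewrite eqn_leq le_in1 le_n1i.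
rewrite eqxx /fps_1mcz /= invr1 big_ltn // /= subSS subn0 nth_n //.
rewrite big_nat_cond big1 ?addr0 ?exprS; first by ring.
by move=> k /andP [/andP [lt1k _] _]; case: k lt1k => [|[|k]] //= _; rewrite mul0r.
Qed.

Lemma fps_inv_1mcz (d : R) m : fps_inv (fps_1mcz d) m = d ^+ m.
Proof. by rewrite /fps_inv (proj2 (fps_inv_coefs_1mcz d m)). Qed.

Lemma fps_ratio0 (c d : R) : fps_ratio c d 0%N = 1.
Proof. by rewrite /fps_mul big_ord1 fps_inv_1mcz /fps_1mcz /= mulr1. Qed.

Lemma fps_ratioS (c d : R) n : fps_ratio c d n.+1 = d ^+ n.+1 - c * d ^+ n.
Proof.
rewrite /fps_mul !big_ord_recl big1 ?addr0; last by move=> i _; rewrite /fps_1mcz mul0r.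
by rewrite !fps_inv_1mcz /fps_1mcz /= subn0 subSS subn0; ring.
Qed.

(* [(1 - d z) Q = (1 - c z) Q'] forces [Q = (1 - c z)/(1 - d z) Q']. *)
Lemma fps_ratio_mul (c d : R) (Q Q' : fps R) :
  Q 0%N = Q' 0%N -> (forall n, Q n.+1 - d * Q n = Q' n.+1 - c * Q' n) ->
  forall n, fps_mul (fps_ratio c d) Q' n = Q n.
Proof.
move=> Q0 QS; set r := fps_ratio c d.
have r0 : r 0%N = 1 by exact: fps_ratio0.
have rS k : r k.+1 = d * r k - (k == 0)%:R * c.
  by rewrite /r; case: k => [|k]; rewrite fps_ratioS ?fps_ratio0 ?fps_ratioS ?exprS /=; ring.
elim=> [|n IH]; first by rewrite /fps_mul big_ord1 r0 mul1r Q0.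
have {}IH : \sum_(k < n.+1) r k * Q' (n - k)%N = Q n := IH.
rewrite /fps_mul big_ord_recl r0 mul1r subn0.
under eq_bigr => k _ do rewrite lift0 subSS rS mulrBl -mulrA.
rewrite sumrB -mulr_sumr IH big_ord_recl subn0 big1 ?addr0; last first.
  by move=> k _; rewrite lift0 /= mulr0n !mul0r.
by move: (QS n) => /eqP; rewrite subr_eq => /eqP ->; rewrite /=; ring.
Qed.

End FormalSeries.

Section TailProduct.
Variables (R : fieldType) (N : nat) (lam : 'I_N -> R).

Definition tail_weight (k m : nat) : R :=
  \sum_(i : 'I_N | (k <= i)%N) lam i * casimir_coef lam m i.

Definition tail_series (k : nat) : fps R :=
  fun n => (n == 0)%:R - (if n is m.+1 then 2 * tail_weight k m else 0).

Lemma tail_weight_split (i0 : 'I_N) m :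
  tail_weight i0 m = lam i0 * casimir_coef lam m i0 + tail_weight i0.+1 m.
Proof.
rewrite /tail_weight (bigD1 i0) //=; congr (_ + _); apply: eq_bigl => i.
by rewrite ltn_neqAle andbC eq_sym -val_eqE.
Qed.

Lemma fps_prod_drop d k : (k + d = N)%N -> forall n,
  foldr (@fps_mul R) (@fps_one R)
    [seq fps_mul (fps_1mcz (lam i * (lam i + 1))) (fps_inv (fps_1mcz (lam i * (lam i - 1))))
    | i <- drop k (enum 'I_N)] n = tail_series k n.
Proof.
elim: d k => [|d IH] k kdN n.
  rewrite addn0 in kdN; rewrite drop_oversize ?size_enum_ord ?kdN //= /tail_series.
  case: n => [|n]; rewrite ?subr0 // /tail_weight big_pred0 ?mulr0 ?subr0 // => i.
  by rewrite leqNgt ltn_ord.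
have ltkN : (k < N)%N by rewrite -kdN -addSnnS leq_addr.
rewrite (drop_nth (Ordinal ltkN)) ?size_enum_ord //=.
set i0 := nth _ (enum 'I_N) k.
have i0E : (i0 : nat) = k by rewrite /i0 nth_enum_ord.
apply: fps_ratio_mul => [|m]; first by rewrite IH ?addSnnS.
rewrite !IH ?addSnnS // /tail_series /= -i0E.
case: m => [|m]; rewrite !tail_weight_split /= ?mulr0n ?mulr1n; first by ring.
by rewrite -/(tail_weight i0.+1 m); ring.
Qed.

End TailProduct.

Theorem mainTheorem12 (N : nat) (hN : (0 < N)%N) (V : lmodType algC)
  (rho : Idx N -> Idx N -> V -> V) (P : V -> V)
  (hrep : is_qN_rep rho P)
  (lam : 'I_N -> algC) (v : V)
  (hv0 : forall i j : Idx N, (absI i < absI j)%N -> rho i j v = 0)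
  (hvl : forall k : 'I_N, rho (posI k) (posI k) v = lam k *: v) :
  exists gamma : nat -> algC,
    (forall m : nat, casimir rho (2 * m + 1) v = gamma m *: v) /\
    (forall m : nat, gamma m =
       fps_divz (fps_sub (@fps_one algC)
         (fps_prod (fun k : 'I_N =>
            fps_mul (fps_1mcz (lam k * (lam k + 1)))
                    (fps_inv (fps_1mcz (lam k * (lam k - 1))))))) m).
Proof.
case: hrep => rho_lin rho_negI _ _ rho_comm.
have brackets : brackets_like_F rho rho by move=> a b i j w; exact: rho_comm.
exists (fun m => 2 * \sum_(i : 'I_N) lam i * casimir_coef lam m i); split.
  exact: (casimir_odd rho_lin rho_negI brackets hv0 hvl).
move=> m; rewrite /fps_divz /fps_sub /fps_prod -(drop0 (enum 'I_N)).
rewrite (@fps_prod_drop _ _ lam N 0) // /tail_series /fps_one /= !sub0r opprK.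
by congr (_ * _); apply: eq_bigl.
Qed.
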